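(* Let $\mathcal X,\mathcal Y$ be nonempty convex compact sets and $\mathcal L:\mathcal X\times\mathcal Y\to\mathbb R$ a differentiable, uniformly strongly convex-concave function with saddle point $(x^*,y^* )$, and let $z=(x,y)\in\mathcal X\times\mathcal Y$. (I) If $(x^*,y^* )$ lies in the relative interior of $\mathcal X\times\mathcal Y$ and $\mu^{int}_{\mathcal L}>0$ (with reference point $(x^*,y^* )$), then $w(z)\le\frac{(g^{FW}(z))^2}{2\mu^{int}_{\mathcal L}}$. (P) If $\mathcal X=\mathrm{conv}(\mathcal A)$, $\mathcal Y=\mathrm{conv}(\mathcal B)$ with $\mathcal A,\mathcal B$ finite and $\mu^A_{\mathcal L}>0$, then for any active set expansion of $z$, $w(z)\le h(z)\le\frac{(g^{PFW}(z))^2}{2\mu^A_{\mathcal L}}$, where $g^{PFW}(z)$ is computed with respect to that expansion.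
   Context: Convex-concave: $\mathcal L(\cdot,y)$ convex, $\mathcal L(x,\cdot)$ concave. Uniformly strongly convex-concave: there are $\mu_{\mathcal X},\mu_{\mathcal Y}>0$ with $\mathcal L(\cdot,y)$ $\mu_{\mathcal X}$-strongly convex for every $y$ and $-\mathcal L(x,\cdot)$ $\mu_{\mathcal Y}$-strongly convex for every $x$. Saddle point: $\mathcal L(x^*,y)\le\mathcal L(x^*,y^* )\le\mathcal L(x,y^* )$ for all $x,y$. For $z=(x,y)$: $r(z):=(\nabla_x\mathcal L(z),-\nabla_y\mathcal L(z))$, $h(z):=\max_{y'}\mathcal L(x,y')-\min_{x'}\mathcal L(x',y)$, $w(z):=\mathcal L(x,y^* )-\mathcal L(x^*,y)$, $s(z)\in\arg\min_{s\in\mathcal X\times\mathcal Y}\langle s,r(z)\rangle$, $g^{FW}(z):=\langle z-s(z),r(z)\rangle$. Active set expansion: weights $\alpha>0$ on $S_x\subseteq\mathcal A$ and on $S_y\subseteq\mathcal B$, each summing to one, with $x=\sum_{v\in S_x}\alpha_vv$, $y=\sum_{v\in S_y}\alpha_vv$; then $v\in\arg\max_{v\in S_x\times S_y}\langle r(z),v\rangle$ and $g^{PFW}(z):=\langle v-s(z),r(z)\rangle$. $\mathcal F:=\{\mathcal L(\cdot,y):y\in\mathcal Y\}$, $\mathcal G:=\{-\mathcal L(x,\cdot):x\in\mathcal X\}$. Interior strong convexity of $f$ on $\mathcal K$ w.r.t. $x_c$ in its relative interior: $\mu_f^{x_c}:=\inf\frac2{\gamma^2}(f(u)-f(x)-\langle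 u-x,\nabla f(x)\rangle)$ over $x\in\mathcal K\setminus\{x_c\}$, $\gamma\in(0,1]$, $u=x+\gamma(s-x)$ where $s$ is where the ray from $x$ through $x_c$ meets the relative boundary of $\mathcal K$; $\mu^{int}_{\mathcal L}:=\min\{\inf_{f\in\mathcal F}\mu_f^{x^*},\inf_{g\in\mathcal G}\mu_g^{y^*}\}$. Geometric strong convexity of $f$ on $\mathcal K=\mathrm{conv}(\mathcal A)$: for $x\in\mathcal K$, $\mathcal S_x$ = family of $S\subseteq\mathcal A$ such that $x$ is a convex combination of all elements of $S$ with positive coefficients, $v_S(x)\in\arg\max_{v\in S}\langle\nabla f(x),v\rangle$, $v_f(x)\in\arg\min\{\langle\nabla f(x),v\rangle:v=v_S(x),S\in\mathcal S_x\}$, $s_f(x)\in\arg\min_{v\in\mathcal A}\langle\nabla f(x),v\rangle$, $\gamma^A(x,x'):=\frac{\langle-\nabla f(x),x'-x\rangle}{\langle-\nabla f(x),s_f(x)-v_f(x)\rangle}$, $\mu^A_f:=\inf_{x\in\mathcal K}\inf_{x':\langle\nabla f(x),x'-x\rangle<0}\frac2{\gamma^A(x,x')^2}(f(x')-f(x)-\langle x'-x,\nabla f(x)\rangle)$; $\mu^A_{\mathcal L}:=\min\{\inf_{f\in\mathcal F}\mu^A_f\text{ (over }\mathcal A),\inf_{g\in\mathcal G}\mu^A_g\text{ (over }\mathcal B)\}$. *)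

From HB Require Import structures.
From mathcomp Require Import all_boot all_order all_algebra.
From mathcomp Require Import finmap.
From mathcomp Require Import all_classical all_reals all_analysis.
Set Implicit Arguments. Unset Strict Implicit. Unset Printing Implicit Defensive.
Import Order.TTheory GRing.Theory Num.Theory.
Import numFieldNormedType.Exports.
Local Open Scope classical_set_scope.
Local Open Scope ring_scope.


Section Defs.
Variable R : realType.

Definition dotp (k : nat) (u v : 'rV[R]_k) : R := \sum_(i < k) u 0 i * v 0 i.
Definition sqnorm (k : nat) (v : 'rV[R]_k) : R := dotp v v.

(* gradient: vector of partial derivatives (directional derivatives along
   the standard basis); for differentiable f it is the usual gradient *)
Definition grad (k : nat) (f : 'rV[R]_k -> R) (x : 'rV[R]_k) : 'rV[R]_k :=
  \row_(i < k) ('D_(delta_mx 0 i) f x).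

Definition strongly_convex_on (k : nat) (K : set 'rV[R]_k) (f : 'rV[R]_k -> R)
    (mu : R) :=
  forall x y (t : R), K x -> K y -> 0 <= t <= 1 ->
    f (t *: x + (1 - t) *: y) <=
      t * f x + (1 - t) * f y - mu / 2 * t * (1 - t) * sqnorm (x - y).

Definition unif_strongly_convex_concave (n m : nat) (X : set 'rV[R]_n)
    (Y : set 'rV[R]_m) (L : 'rV[R]_n -> 'rV[R]_m -> R) :=
  exists muX muY : R, 0 < muX /\ 0 < muY /\
    (forall y, Y y -> strongly_convex_on X (fun x => L x y) muX) /\
    (forall x, X x -> strongly_convex_on Y (fun y => - L x y) muY).

Definition saddle_point (n m : nat) (X : set 'rV[R]_n) (Y : set 'rV[R]_m)
    (L : 'rV[R]_n -> 'rV[R]_m -> R) (xs : 'rV[R]_n) (ys : 'rV[R]_m) :=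
  X xs /\ Y ys /\ forall x y, X x -> Y y -> L xs y <= L xs ys <= L x ys.

Definition rfield (n m : nat) (L : 'rV[R]_n -> 'rV[R]_m -> R)
    (z : 'rV[R]_n * 'rV[R]_m) : 'rV[R]_n * 'rV[R]_m :=
  (grad (fun x => L x z.2) z.1, - grad (fun y => L z.1 y) z.2).

Definition dotp2 (n m : nat) (a b : 'rV[R]_n * 'rV[R]_m) : R :=
  dotp a.1 b.1 + dotp a.2 b.2.

Definition wgap (n m : nat) (L : 'rV[R]_n -> 'rV[R]_m -> R)
    (xs : 'rV[R]_n) (ys : 'rV[R]_m) (z : 'rV[R]_n * 'rV[R]_m) : R :=
  L z.1 ys - L xs z.2.

Definition hgap (n m : nat) (X : set 'rV[R]_n) (Y : set 'rV[R]_m)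
    (L : 'rV[R]_n -> 'rV[R]_m -> R) (z : 'rV[R]_n * 'rV[R]_m) : R :=
  sup [set L z.1 y' | y' in Y] - inf [set L x' z.2 | x' in X].

Definition FW_vertex (n m : nat) (X : set 'rV[R]_n) (Y : set 'rV[R]_m)
    (L : 'rV[R]_n -> 'rV[R]_m -> R) (z s : 'rV[R]_n * 'rV[R]_m) :=
  X s.1 /\ Y s.2 /\
  forall s' : 'rV[R]_n * 'rV[R]_m, X s'.1 -> Y s'.2 ->
    dotp2 s (rfield L z) <= dotp2 s' (rfield L z).

Definition gFW (n m : nat) (L : 'rV[R]_n -> 'rV[R]_m -> R)
    (z s : 'rV[R]_n * 'rV[R]_m) : R := dotp2 (z - s) (rfield L z).

Definition aff_hull (V : lmodType R) (K : set V) : set V :=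
  [set y | exists (k : nat) (p : 'I_k -> V) (c : 'I_k -> R),
     (forall i, K (p i)) /\ \sum_(i < k) c i = 1 /\ y = \sum_(i < k) c i *: p i].

Definition rel_interior (V : normedModType R) (K : set V) : set V :=
  [set x | K x /\ exists e : R, 0 < e /\
     forall y, aff_hull K y -> `|y - x| < e -> K y].

Definition rel_boundary (V : normedModType R) (K : set V) : set V :=
  closure K `\` rel_interior K.

Definition ray_exit (k : nat) (K : set 'rV[R]_k) (x xc s : 'rV[R]_k) :=
  exists t : R, 1 <= t /\ s = x + t *: (xc - x) /\ rel_boundary K s.

Definition mu_int (k : nat) (K : set 'rV[R]_k) (f : 'rV[R]_k -> R)
    (xc : 'rV[R]_k) : \bar R :=
  ereal_inf [set e | exists (x : 'rV[R]_k) (gam : R) (s : 'rV[R]_k),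
     K x /\ x <> xc /\ 0 < gam <= 1 /\ ray_exit K x xc s /\
     e = (2 / gam ^+ 2 *
          (f (x + gam *: (s - x)) - f x -
           dotp ((x + gam *: (s - x)) - x) (grad f x)))%:E].

Definition mu_int_L (n m : nat) (X : set 'rV[R]_n) (Y : set 'rV[R]_m)
    (L : 'rV[R]_n -> 'rV[R]_m -> R) (xs : 'rV[R]_n) (ys : 'rV[R]_m) : \bar R :=
  Order.min (ereal_inf [set mu_int X (fun x => L x y) xs | y in Y])
            (ereal_inf [set mu_int Y (fun y => - L x y) ys | x in X]).

Definition conv_hull (k : nat) (A : {fset 'rV[R]_k}) : set 'rV[R]_k :=
  [set x | exists lam : 'rV[R]_k -> R, (forall v, v \in A -> 0 <= lam v) /\
     \sum_(v <- A) lam v = 1 /\ x = \sum_(v <- A) lam v *: v].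

Definition active_set (k : nat) (A S : {fset 'rV[R]_k}) (x : 'rV[R]_k) :=
  fsubset S A /\ exists lam : 'rV[R]_k -> R, (forall v, v \in S -> 0 < lam v) /\
     \sum_(v <- S) lam v = 1 /\ x = \sum_(v <- S) lam v *: v.

Definition is_sf (k : nat) (A : {fset 'rV[R]_k}) (f : 'rV[R]_k -> R)
    (x s : 'rV[R]_k) :=
  s \in A /\ forall a, a \in A -> dotp (grad f x) s <= dotp (grad f x) a.

Definition is_vS (k : nat) (S : {fset 'rV[R]_k}) (f : 'rV[R]_k -> R)
    (x v : 'rV[R]_k) :=
  v \in S /\ forall a, a \in S -> dotp (grad f x) a <= dotp (grad f x) v.

Definition is_vf (k : nat) (A : {fset 'rV[R]_k}) (f : 'rV[R]_k -> R)
    (x v : 'rV[R]_k) :=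
  (exists S, active_set A S x /\ is_vS S f x v) /\
  forall S v', active_set A S x -> is_vS S f x v' ->
    dotp (grad f x) v <= dotp (grad f x) v'.

Definition mu_geom (k : nat) (A : {fset 'rV[R]_k}) (f : 'rV[R]_k -> R) : \bar R :=
  ereal_inf [set e | exists (x x' s v : 'rV[R]_k) (gam : R),
     conv_hull A x /\ conv_hull A x' /\ dotp (grad f x) (x' - x) < 0 /\
     is_sf A f x s /\ is_vf A f x v /\
     gam = dotp (- grad f x) (x' - x) / dotp (- grad f x) (s - v) /\
     e = (2 / gam ^+ 2 * (f x' - f x - dotp (x' - x) (grad f x)))%:E].

Definition mu_geom_L (n m : nat) (A : {fset 'rV[R]_n}) (B : {fset 'rV[R]_m})
    (X : set 'rV[R]_n) (Y : set 'rV[R]_m)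
    (L : 'rV[R]_n -> 'rV[R]_m -> R) : \bar R :=
  Order.min (ereal_inf [set mu_geom A (fun x => L x y) | y in Y])
            (ereal_inf [set mu_geom B (fun y => - L x y) | x in X]).

Definition PFW_away (n m : nat) (Sx : {fset 'rV[R]_n}) (Sy : {fset 'rV[R]_m})
    (L : 'rV[R]_n -> 'rV[R]_m -> R) (z v : 'rV[R]_n * 'rV[R]_m) :=
  v.1 \in Sx /\ v.2 \in Sy /\
  forall v' : 'rV[R]_n * 'rV[R]_m, v'.1 \in Sx -> v'.2 \in Sy ->
    dotp2 v' (rfield L z) <= dotp2 v (rfield L z).

Definition gPFW (n m : nat) (L : 'rV[R]_n -> 'rV[R]_m -> R)
    (z v s : 'rV[R]_n * 'rV[R]_m) : R := dotp2 (v - s) (rfield L z).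

End Defs.

(* Both bounds come from one estimate along a segment: if the strong-convexity
   constant [M] gives [f (x + gam d) - f x - gam <d, grad f x> >= gam^2 M / 2] and
   [<-d, grad f x> <= G], then
   [f x - f (x + gam d) <= gam G - gam^2 M / 2 <= G^2 / (2 M)].
   For (I), [x + gam d] is the saddle coordinate itself and [d] runs to the point
   where the ray from [x] through it leaves the set, so [G] is the Frank-Wolfe gap.
   For (P), [x + gam d] is an arbitrary point and [gam] is measured in units of the
   pairwise direction [v_f(x) - s_f(x)], whose gap is dominated by the PFW gap of
   any active set; directions of ascent are handled by convexity alone.
   Applying this to [L(., y)] and [- L(x, .)] and adding gives the theorem, as
   [a^2 + b^2 <= (a + b)^2] for nonnegative gaps; an infinite constant is handled
   by letting [M] range over all finite values below it. *)

From HB Require Import structures.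
From mathcomp Require Import all_boot all_order all_algebra.
From mathcomp Require Import finmap.
From mathcomp Require Import all_classical all_reals all_analysis.
From mathcomp Require Import ring lra.
Set Implicit Arguments. Unset Strict Implicit. Unset Printing Implicit Defensive.
Import Order.TTheory GRing.Theory Num.Theory.
Import numFieldNormedType.Exports.
Local Open Scope classical_set_scope.
Local Open Scope ring_scope.

Section InnerProduct.
Variables (R : realType) (k : nat).
Implicit Types (a b c : 'rV[R]_k).

Lemma dotpC a c : dotp a c = dotp c a.
Proof. by apply: eq_bigr => i _; rewrite mulrC. Qed.

Lemma dotpDl a b c : dotp (a + b) c = dotp a c + dotp b c.
Proof. by rewrite /dotp -big_split; apply: eq_bigr => i _; rewrite !mxE mulrDl. Qed.

Lemma dotpZl (t : R) a c : dotp (t *: a) c = t * dotp a c.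
Proof. by rewrite /dotp mulr_sumr; apply: eq_bigr => i _; rewrite !mxE mulrA. Qed.

Lemma dotpNl a c : dotp (- a) c = - dotp a c.
Proof. by rewrite -scaleN1r dotpZl mulN1r. Qed.

Lemma dotpBl a b c : dotp (a - b) c = dotp a c - dotp b c.
Proof. by rewrite dotpDl dotpNl. Qed.

Lemma dotp0l c : dotp 0 c = 0.
Proof. by rewrite -(scale0r (0 : 'rV[R]_k)) dotpZl mul0r. Qed.

Lemma sqnorm_ge0 a : 0 <= sqnorm a.
Proof. by apply: sumr_ge0 => i _; rewrite -expr2 sqr_ge0. Qed.

Lemma fw_gap_ub (K : set 'rV[R]_k) r x s :
  (forall a, K a -> dotp s r <= dotp a r) ->
  forall a, K a -> dotp (x - a) r <= dotp (x - s) r.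
Proof. by move=> s_min a Ka; rewrite !dotpBl lerD2l lerN2 s_min. Qed.

Lemma fw_gap_ge0 (K : set 'rV[R]_k) r x s :
  (forall a, K a -> dotp s r <= dotp a r) -> K x -> 0 <= dotp (x - s) r.
Proof. by move=> s_min Kx; rewrite -(dotp0l r) -(subrr x) (fw_gap_ub _ s_min). Qed.

End InnerProduct.

Section Gradient.
Variables (R : realType) (k : nat).
Implicit Types (f : 'rV[R]_k -> R) (x d : 'rV[R]_k).

Lemma derive_grad f x d : differentiable f x -> 'D_d f x = dotp d (grad f x).
Proof.
move=> df; rewrite deriveE // {1}(row_sum_delta d) linear_sum /dotp.
by apply: eq_bigr => i _; rewrite linearZ /= mxE -deriveE.
Qed.

Lemma gradN f x : differentiable f x -> grad (fun y => - f y) x = - grad f x.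
Proof.
move=> df; apply/rowP => i; rewrite !mxE.
exact: (deriveN (diff_derivable df)).
Qed.

Lemma grad_le_chord f x x' : differentiable f x ->
  (forall t, 0 < t <= 1 -> f (t *: (x' - x) + x) <= f x + t * (f x' - f x)) ->
  dotp (x' - x) (grad f x) <= f x' - f x.
Proof.
move=> df chord; rewrite -derive_grad //.
have dfx : derivable f x (x' - x) := diff_derivable df.
set q := fun h : R => h^-1 *: ((f \o shift x) (h *: (x' - x)) - f x).
have q_right : q @ 0^'+ --> 'D_(x' - x) f x.
  move=> A /dfx /nbhs_ballP [_ /posnumP[e] eA].
  by exists e%:num => //= h eh; rewrite lt_def => /andP [h0 _]; apply: eA.
apply: (cvgr_to_le q_right); near=> h.
have h0 : 0 < h by near: h; exact: nbhs_right_gt.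
have h1 : h <= 1 by near: h; exact: nbhs_right_le.
rewrite /q /= -[_ *: _]/(_ * _) ler_pdivrMl // lerBlDl.
by apply: chord; rewrite h0 h1.
Unshelve. all: by end_near. Qed.

Lemma strongly_convex_grad_le (K : set 'rV[R]_k) f mu x x' :
  0 <= mu -> strongly_convex_on K f mu -> K x -> K x' -> differentiable f x ->
  dotp (x' - x) (grad f x) <= f x' - f x.
Proof.
move=> mu0 sc Kx Kx' df; apply: grad_le_chord => // t /andP[t0 t1].
have := sc x' x t Kx' Kx; rewrite (ltW t0) t1 => /(_ isT).
have -> : t *: x' + (1 - t) *: x = t *: (x' - x) + x.
  by apply/rowP => i; rewrite !mxE; ring.
have : 0 <= mu / 2 * t * (1 - t) * sqnorm (x' - x).
  by rewrite !mulr_ge0 ?sqnorm_ge0 ?subr_ge0 ?divr_ge0 ?(ltW t0).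
lra.
Qed.

End Gradient.

Lemma aff_hull_line (R : realType) (V : lmodType R) (K : set V) a b (t : R) :
  K a -> K b -> aff_hull K (a + t *: (b - a)).
Proof.
move=> Ka Kb; exists 2, (fun i : 'I_2 => if i == ord0 then a else b),
  (fun i : 'I_2 => if i == ord0 then 1 - t else t).
split; first by move=> i; case: ifP.
rewrite !big_ord_recr !big_ord0 /= !add0r; split; first by rewrite subrK.
by rewrite scalerBr scalerBl scale1r addrAC addrA.
Qed.

Section RayExit.
Variables (R : realType) (k : nat) (K : set 'rV[R]_k) (x xc : 'rV[R]_k).
Hypotheses (cK : compact K) (Kx : K x) (Kxc : K xc) (x_neq_xc : x != xc).

Let d := xc - x.
Let T := [set t : R | 0 <= t /\ K (x + t *: d)].

Let d_gt0 : 0 < `|d|.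
Proof. by rewrite normr_gt0 subr_eq0 eq_sym. Qed.

Let T1 : T 1.
Proof. by split => //; rewrite scale1r /d addrC subrK. Qed.

Let T_ubound : exists M, ubound T M.
Proof.
have [B [_ HB]] := compact_bounded cK.
exists ((B + 1 + `|x|) / `|d|) => t [t0 Kt]; rewrite ler_pdivlMr //.
have : `|x + t *: d| <= B + 1 by apply: (HB (B + 1)) => //; rewrite ltrDl.
have : `|t *: d| <= `|x + t *: d| + `|x|.
  by rewrite -{1}(addKr x (t *: d)) addrC (le_trans (ler_normD _ _)) // normrN addrC.
rewrite normrZ ger0_norm //; lra.
Qed.

Let hsT : has_sup T.
Proof. by split; [exists 1 | exact: T_ubound]. Qed.

Let sup_ge {t} : T t -> t <= sup T.
Proof. by move=> Tt; apply: ub_le_sup => //; exact: T_ubound. Qed.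

Let K_sup : K (x + sup T *: d).
Proof.
rewrite (closure_id K).1; last exact: compact_closed.
move=> A /nbhs_ballP [e e0 eA].
have [t Tt tlt] := sup_adherent (divr_gt0 e0 d_gt0) hsT.
exists (x + t *: d); split; first exact: Tt.2.
apply: eA; rewrite -ball_normE /ball_ /=.
rewrite opprD addrA [x + _]addrC addrK -scalerBl normrZ ger0_norm ?subr_ge0 ?sup_ge //.
by rewrite -ltr_pdivlMr // ltrBlDl addrC -ltrBlDl.
Qed.

(* Were [x + sup T *: d] relatively interior, the ray would stay in [K]
   slightly beyond it, contradicting maximality of [sup T]. *)
Let sup_not_rel_interior : ~ rel_interior K (x + sup T *: d).
Proof.
move=> [_ [e [e0 eK]]].
set del := e / (2 * `|d|).
have del0 : 0 < del by rewrite divr_gt0 // mulr_gt0.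
suff /sup_ge : T (sup T + del) by lra.
have sup1 := sup_ge T1.
split; first lra.
apply: eK; first exact: aff_hull_line.
rewrite opprD addrA [x + _]addrC addrK -scalerBl (addrC (sup T)) addrK.
rewrite normrZ gtr0_norm // /del.
have -> : e / (2 * `|d|) * `|d| = e / 2 by field; rewrite gt_eqF.
lra.
Qed.

Lemma ray_exit_exists : exists2 s, ray_exit K x xc s & K s.
Proof.
exists (x + sup T *: d) => //; exists (sup T); split; first exact: sup_ge.
by split => //; split; [exact: subset_closure | exact: sup_not_rel_interior].
Qed.

End RayExit.

Lemma quadratic_gap_bound (R : realFieldType) (gam D G Mr a : R) :
  0 < gam -> 0 < Mr -> D <= G -> Mr <= 2 / gam ^+ 2 * (a + gam * D) ->
  - a <= G ^+ 2 / (2 * Mr).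
Proof.
move=> gam0 Mr0 DG Mr_le.
have gam2 : 0 < gam ^+ 2 by rewrite exprn_gt0.
have : gam ^+ 2 * Mr / 2 <= a + gam * D.
  by rewrite mulrAC -ler_pdivlMl ?divr_gt0 // invf_div.
have : gam * D <= gam * G by rewrite ler_wpM2l // ltW.
have -> : G ^+ 2 / (2 * Mr) =
    gam * G - gam ^+ 2 * Mr / 2 + (G - gam * Mr) ^+ 2 / (2 * Mr).
  by field; rewrite gt_eqF.
have : 0 <= (G - gam * Mr) ^+ 2 / (2 * Mr).
  by rewrite divr_ge0 ?sqr_ge0 // mulr_ge0 // ltW.
lra.
Qed.

Lemma add_sqr_div_le (R : realFieldType) (a b G H M : R) :
  0 <= G -> 0 <= H -> 0 < M ->
  a <= G ^+ 2 / (2 * M) -> b <= H ^+ 2 / (2 * M) ->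
  a + b <= (G + H) ^+ 2 / (2 * M).
Proof.
move=> G0 H0 M0 aG bH; apply: le_trans (lerD aG bH) _.
rewrite -mulrDl; apply: ler_wpM2r; first by rewrite invr_ge0 mulr_ge0 // ltW.
have : 0 <= G * H by rewrite mulr_ge0.
rewrite !expr2; lra.
Qed.

Lemma lee_sqr_div_of_fin (R : realType) (a G : R) (M : \bar R) : (0 < M)%E ->
  (forall Mr, 0 < Mr -> (Mr%:E <= M)%E -> a <= G ^+ 2 / (2 * Mr)) ->
  (a%:E <= (G ^+ 2)%:E / (2%:E * M))%E.
Proof.
case: M => [Mr | |] //= M0 bound.
  rewrite lte_fin in M0.
  by rewrite -EFinM inver gt_eqF ?mulr_gt0 // -EFinM lee_fin bound.
rewrite mulry gtr0_sg // mul1e invey mule0 lee_fin leNgt; apply/negP => a0.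
have G1 : 0 < G ^+ 2 + 1 by rewrite ltr_wpDl ?sqr_ge0.
have := bound ((G ^+ 2 + 1) / a) (divr_gt0 G1 a0) (leey _).
have -> : G ^+ 2 / (2 * ((G ^+ 2 + 1) / a)) = a * (G ^+ 2 / (2 * (G ^+ 2 + 1))).
  by field; rewrite !gt_eqF.
rewrite ler_pMr // ler_pdivlMr ?mulr_gt0 // mul1r.
have := sqr_ge0 G; lra.
Qed.

Lemma ereal_gt0_fin_lb (R : realType) (M : \bar R) :
  (0 < M)%E -> exists2 Mr : R, 0 < Mr & (Mr%:E <= M)%E.
Proof.
case: M => [Mr M0 | _ |] //; first by exists Mr; rewrite // -lte_fin.
by exists 1; rewrite ?leey.
Qed.

Lemma mu_int_gap_bound (R : realType) k (K : set 'rV[R]_k) f x xc G Mr :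
  compact K -> K x -> K xc ->
  (forall s, K s -> dotp (x - s) (grad f x) <= G) ->
  0 < Mr -> (Mr%:E <= mu_int K f xc)%E ->
  f x - f xc <= G ^+ 2 / (2 * Mr).
Proof.
move=> cK Kx Kxc gapG Mr0 Mr_le.
have [/eqP <-|x_neq_xc] := boolP (x == xc).
  by rewrite subrr divr_ge0 ?sqr_ge0 // mulr_ge0 // ltW.
have [s exit_s Ks] := ray_exit_exists cK Kx Kxc x_neq_xc.
have [t [t1 [s_eq _]]] := exit_s.
set gam := t^-1.
have gam0 : 0 < gam by rewrite invr_gt0; lra.
have u_xc : x + gam *: (s - x) = xc.
  rewrite s_eq addrAC subrr add0r scalerA mulVf ?scale1r 1?addrC ?subrK //.
  by rewrite gt_eqF //; lra.
rewrite -opprB; apply: (quadratic_gap_bound gam0 Mr0 (gapG s Ks)).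
rewrite -lee_fin; apply: (le_trans Mr_le); apply: ereal_inf_lbound.
exists x, gam, s; split => //; split; first by move=> xE; rewrite xE eqxx in x_neq_xc.
split; first by rewrite gam0 invf_le1 //; lra.
split => //; rewrite -u_xc (addrAC x) subrr add0r dotpZl.
by rewrite -[x - s]opprB dotpNl mulrN.
Qed.

Lemma exists_argmin (T : eqType) (R : realDomainType) (s : seq T)
    (P : T -> Prop) (g : T -> R) :
  (exists2 a, a \in s & P a) ->
  exists a, [/\ a \in s, P a & forall b, b \in s -> P b -> g a <= g b].
Proof.
elim: s => [|c s IH] [a]; first by rewrite in_nil.
rewrite in_cons => a_cs Pa.
have [[a0 a0s Pa0] | no_s] := pselect (exists2 a, a \in s & P a); last first.
  have Pc : P c by case/orP: a_cs => [/eqP <- //| a_s]; case: no_s; exists a.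
  exists c; split => [||b]; rewrite ?mem_head // in_cons => /orP[/eqP -> //|b_s Pb].
  by case: no_s; exists b.
have [m [m_s Pm m_min]] := IH (ex_intro2 _ _ a0 a0s Pa0).
have [Pc_lt | c_ge] := pselect (P c /\ g c < g m).
  exists c; split => [||b]; rewrite ?mem_head //; first by case: Pc_lt.
  rewrite in_cons => /orP[/eqP -> //|b_s Pb].
  exact: le_trans (ltW Pc_lt.2) (m_min b b_s Pb).
exists m; split => [||b]; rewrite ?in_cons ?m_s ?orbT //.
case/orP => [/eqP -> Pc|]; last exact: m_min.
by rewrite leNgt; apply/negP => lt; apply: c_ge.
Qed.

Section GeometricStrongConvexity.
Variables (R : realType) (k : nat) (A : {fset 'rV[R]_k}) (f : 'rV[R]_k -> R).
Implicit Types (x v s : 'rV[R]_k) (S : {fset 'rV[R]_k}).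

Lemma conv_hull_atom a : a \in A -> conv_hull A a.
Proof.
move=> aA; exists (fun v => (v == a)%:R); split; first by move=> v _; rewrite ler0n.
have rem_neq v : v \in rem a A -> (v == a) = false.
  by rewrite rem_filter ?fset_uniq // mem_filter => /andP[/negbTE].
by split; rewrite (big_rem a aA) /= eqxx ?scale1r big1_seq ?addr0 //
  => v /andP[_ /rem_neq ->]; rewrite ?scale0r.
Qed.

Lemma active_set_sub S x v : active_set A S x -> v \in S -> v \in A.
Proof. by move=> [/fsubsetP SA _] /SA. Qed.

Lemma is_sf_exists x a : a \in A -> exists s, is_sf A f x s.
Proof.
move=> aA; have [s [sA _ s_min]] := @exists_argmin _ _ A (fun=> True)
  (dotp (grad f x)) (ex_intro2 _ _ a aA I).
by exists s; split => // b bA; apply: s_min.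
Qed.

Lemma is_vf_exists S x v : active_set A S x -> is_vS S f x v ->
  exists v0, is_vf A f x v0.
Proof.
move=> aS vS; have [v0 [_ Pv0 v0_min]] := @exists_argmin _ _ A
  (fun v => exists S, active_set A S x /\ is_vS S f x v) (dotp (grad f x))
  (ex_intro2 _ _ v (active_set_sub aS vS.1) (ex_intro _ S (conj aS vS))).
exists v0; split => // S' v' aS' v'S; apply: v0_min; last by exists S'.
exact: active_set_sub aS' v'S.1.
Qed.

Lemma is_sf_le_is_vf x s v : is_sf A f x s -> is_vf A f x v ->
  dotp s (grad f x) <= dotp v (grad f x).
Proof.
move=> [_ s_min] [[S [aS [vS _]]] _].
by rewrite !(dotpC _ (grad f x)) s_min // (active_set_sub aS vS).
Qed.

(* Junk values: if [<v - s, grad f x> = 0] then [gam = 0] and the expression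
   of [mu_geom] is [0], which contradicts [0 < Mr]. *)
Lemma mu_geom_gap_bound x x' s v G Mr :
  conv_hull A x -> conv_hull A x' -> is_sf A f x s -> is_vf A f x v ->
  dotp (x' - x) (grad f x) <= f x' - f x ->
  dotp (v - s) (grad f x) <= G ->
  0 < Mr -> (Mr%:E <= mu_geom A f)%E ->
  f x - f x' <= G ^+ 2 / (2 * Mr).
Proof.
move=> Ax Ax' sf vf first_order DG Mr0 Mr_le.
set r := grad f x; set D := dotp (v - s) r.
have [dir_ge0 | dir_lt0] := lerP 0 (dotp (x' - x) r).
  have : 0 <= G ^+ 2 / (2 * Mr) by rewrite divr_ge0 ?sqr_ge0 // mulr_ge0 // ltW.
  lra.
set gam := dotp (- r) (x' - x) / dotp (- r) (s - v).
have sv_D : dotp (- r) (s - v) = D.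
  by rewrite dotpNl dotpC -dotpNl opprB.
have Mr_e : Mr <= 2 / gam ^+ 2 * (f x' - f x - dotp (x' - x) r).
  rewrite -lee_fin; apply: (le_trans Mr_le); apply: ereal_inf_lbound.
  exists x, x', s, v, gam; do !split => //.
  by rewrite dotpC.
have D0 : D != 0.
  apply: contraTneq Mr_e => D0.
  by rewrite -ltNge /gam sv_D D0 invr0 mulr0 expr0n /= invr0 mulr0 mul0r.
have D_gt0 : 0 < D by rewrite lt_def D0 /D dotpBl subr_ge0 is_sf_le_is_vf.
have gam0 : 0 < gam by rewrite /gam sv_D dotpNl dotpC divr_gt0 // oppr_gt0.
rewrite -opprB; apply: (quadratic_gap_bound gam0 Mr0 DG).
have -> : gam * dotp (v - s) (grad f x) = - dotp (x' - x) r.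
  by rewrite -/r -/D /gam sv_D divfK // dotpNl dotpC.
exact: Mr_e.
Qed.

Lemma pfw_gap_ge0 S r x v s :
  active_set A S x -> v \in S ->
  (forall a, conv_hull A a -> dotp s r <= dotp a r) -> 0 <= dotp (v - s) r.
Proof.
move=> aS vS s_min; rewrite dotpBl subr_ge0 s_min //.
exact/conv_hull_atom/(active_set_sub aS vS).
Qed.

Lemma pfw_gap_bound S mu x x' v s G Mr :
  0 <= mu -> strongly_convex_on (conv_hull A) f mu -> differentiable f x ->
  conv_hull A x -> conv_hull A x' -> active_set A S x -> v \in S ->
  (forall a, a \in S -> dotp a (grad f x) <= dotp v (grad f x)) ->
  (forall a, conv_hull A a -> dotp s (grad f x) <= dotp a (grad f x)) ->
  dotp (v - s) (grad f x) <= G ->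
  0 < Mr -> (Mr%:E <= mu_geom A f)%E ->
  f x - f x' <= G ^+ 2 / (2 * Mr).
Proof.
move=> mu0 sc df Ax Ax' aS vS v_max s_min gapG Mr0 Mr_le.
have vSv : is_vS S f x v by split => // a aS'; rewrite !(dotpC (grad f x)) v_max.
have [v0 vf] := is_vf_exists aS vSv.
have [s0 sf] := is_sf_exists x (active_set_sub aS vS).
apply: (mu_geom_gap_bound Ax Ax' sf vf _ _ Mr0 Mr_le).
  exact: strongly_convex_grad_le mu0 sc Ax Ax' df.
apply: le_trans gapG; rewrite !dotpBl lerB //.
  by rewrite !(dotpC _ (grad f x)) (vf.2 S v aS vSv).
by apply: s_min; apply: conv_hull_atom; case: sf.
Qed.

End GeometricStrongConvexity.

Section SaddleGaps.
Variables (R : realType) (n m : nat) (X : set 'rV[R]_n) (Y : set 'rV[R]_m).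
Variables (L : 'rV[R]_n -> 'rV[R]_m -> R) (x : 'rV[R]_n) (y : 'rV[R]_m) (Bx By : R).
Hypotheses (Xx : X x) (Yy : Y y).
Hypothesis Bx_ub : forall x', X x' -> L x y - L x' y <= Bx.
Hypothesis By_ub : forall y', Y y' -> L x y' - L x y <= By.

Let lbX : lbound [set L x' y | x' in X] (L x y - Bx).
Proof. by move=> _ [x' Xx' <-]; have := Bx_ub Xx'; lra. Qed.

Let ubY : ubound [set L x y' | y' in Y] (L x y + By).
Proof. by move=> _ [y' Yy' <-]; have := By_ub Yy'; lra. Qed.

Lemma hgap_le : hgap X Y L (x, y) <= Bx + By.
Proof.
have : L x y - Bx <= inf [set L x' y | x' in X].
  by apply: lb_le_inf => //; exists (L x y), x.
have : sup [set L x y' | y' in Y] <= L x y + By.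
  by apply: ge_sup => //; exists (L x y), y.
rewrite /hgap /=; lra.
Qed.

Lemma wgap_le_hgap xs ys : X xs -> Y ys -> wgap L xs ys (x, y) <= hgap X Y L (x, y).
Proof.
move=> Xxs Yys; rewrite /wgap /hgap /= lerB //.
  by apply: ub_le_sup; [exists (L x y + By) | exists ys].
by apply: ge_inf; [exists (L x y - Bx) | exists xs].
Qed.

End SaddleGaps.

Section Slices.
Variables (R : realType) (U V W : normedModType R) (F : U * V -> W) (x : U) (y : V).
Hypothesis dF : differentiable F (x, y).

Lemma differentiable_slice1 : differentiable (fun x0 => F (x0, y)) x.
Proof. by apply: (@differentiable_comp _ _ _ _ (fun x0 => (x0, y)) F). Qed.

Lemma differentiable_slice2 : differentiable (fun y0 => F (x, y0)) y.
Proof. by apply: (@differentiable_comp _ _ _ _ (fun y0 => (x, y0)) F). Qed.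

End Slices.

Lemma min_ereal_inf_le_l (R : realType) (I J : Type) (P : set I) (Q : set J)
    (F : I -> \bar R) (G : J -> \bar R) i :
  P i -> (Order.min (ereal_inf (F @` P)) (ereal_inf (G @` Q)) <= F i)%E.
Proof. by move=> Pi; rewrite ge_min ereal_inf_lbound //; exists i. Qed.

Lemma min_ereal_inf_le_r (R : realType) (I J : Type) (P : set I) (Q : set J)
    (F : I -> \bar R) (G : J -> \bar R) j :
  Q j -> (Order.min (ereal_inf (F @` P)) (ereal_inf (G @` Q)) <= G j)%E.
Proof.
by move=> Qj; rewrite ge_min [X in _ || X]ereal_inf_lbound ?orbT //; exists j.
Qed.

Section SaddleConstants.
Context {R : realType} {n m : nat} {X : set 'rV[R]_n} {Y : set 'rV[R]_m}.
Context {L : 'rV[R]_n -> 'rV[R]_m -> R}.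

Lemma mu_int_L_le_l {xs ys} y : Y y ->
  (mu_int_L X Y L xs ys <= mu_int X (fun x0 => L x0 y) xs)%E.
Proof. exact: min_ereal_inf_le_l. Qed.

Lemma mu_int_L_le_r {xs ys} x : X x ->
  (mu_int_L X Y L xs ys <= mu_int Y (fun y0 => (- L x y0)%R) ys)%E.
Proof. exact: min_ereal_inf_le_r. Qed.

Lemma mu_geom_L_le_l {A B} y : Y y ->
  (mu_geom_L A B X Y L <= mu_geom A (fun x0 => L x0 y))%E.
Proof. exact: min_ereal_inf_le_l. Qed.

Lemma mu_geom_L_le_r {A B} x : X x ->
  (mu_geom_L A B X Y L <= mu_geom B (fun y0 => (- L x y0)%R))%E.
Proof. exact: min_ereal_inf_le_r. Qed.

End SaddleConstants.

Section SaddleFunction.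
Variables (R : realType) (n m : nat) (X : set 'rV[R]_n) (Y : set 'rV[R]_m).
Variables (L : 'rV[R]_n -> 'rV[R]_m -> R) (x : 'rV[R]_n) (y : 'rV[R]_m).

Lemma rfieldE :
  differentiable (fun p : 'rV[R]_n * 'rV[R]_m => L p.1 p.2) (x, y) ->
  rfield L (x, y) = (grad (fun x0 => L x0 y) x, grad (fun y0 => - L x y0) y).
Proof. by move=> /differentiable_slice2 dLy; rewrite /rfield gradN. Qed.

Lemma FW_vertex_min z s : FW_vertex X Y L z s ->
  (forall a, X a -> dotp s.1 (rfield L z).1 <= dotp a (rfield L z).1) /\
  (forall b, Y b -> dotp s.2 (rfield L z).2 <= dotp b (rfield L z).2).
Proof.
move=> [Xs [Ys s_min]]; split => [a Xa | b Yb].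
  by have := s_min (a, s.2) Xa Ys; rewrite /dotp2 lerD2r.
by have := s_min (s.1, b) Xs Yb; rewrite /dotp2 lerD2l.
Qed.

Lemma PFW_away_max (Sx : {fset 'rV[R]_n}) (Sy : {fset 'rV[R]_m}) z v :
  PFW_away Sx Sy L z v ->
  (forall a, a \in Sx -> dotp a (rfield L z).1 <= dotp v.1 (rfield L z).1) /\
  (forall b, b \in Sy -> dotp b (rfield L z).2 <= dotp v.2 (rfield L z).2).
Proof.
move=> [Sv1 [Sv2 v_max]]; split => [a Sa | b Sb].
  by have := v_max (a, v.2) Sa Sv2; rewrite /dotp2 lerD2r.
by have := v_max (v.1, b) Sv1 Sb; rewrite /dotp2 lerD2l.
Qed.

Hypotheses (Xx : X x) (Yy : Y y).
Hypothesis dL : differentiable (fun p : 'rV[R]_n * 'rV[R]_m => L p.1 p.2) (x, y).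

Lemma wgap_le_gFW xs ys s Mr : compact X -> compact Y -> X xs -> Y ys ->
  FW_vertex X Y L (x, y) s -> 0 < Mr -> (Mr%:E <= mu_int_L X Y L xs ys)%E ->
  wgap L xs ys (x, y) <= gFW L (x, y) s ^+ 2 / (2 * Mr).
Proof.
move=> cX cY Xxs Yys /FW_vertex_min; rewrite /gFW /dotp2 rfieldE //=.
move=> -[s1_min s2_min] Mr0 Mr_le.
have -> : wgap L xs ys (x, y) = (L x y - L xs y) + (- L x y - - L x ys).
  by rewrite /wgap /=; ring.
apply: add_sqr_div_le; rewrite ?(fw_gap_ge0 s1_min) ?(fw_gap_ge0 s2_min) //.
  apply: mu_int_gap_bound cX Xx Xxs (fw_gap_ub _ s1_min) Mr0 _.
  exact: le_trans Mr_le (mu_int_L_le_l Yy).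
apply: mu_int_gap_bound cY Yy Yys (fw_gap_ub _ s2_min) Mr0 _.
exact: le_trans Mr_le (mu_int_L_le_r Xx).
Qed.

End SaddleFunction.

Section PairwiseFrankWolfe.
Variables (R : realType) (n m : nat) (L : 'rV[R]_n -> 'rV[R]_m -> R).
Variables (A : {fset 'rV[R]_n}) (B : {fset 'rV[R]_m}) (x : 'rV[R]_n) (y : 'rV[R]_m).
Variables (Sx : {fset 'rV[R]_n}) (Sy : {fset 'rV[R]_m}) (v s : 'rV[R]_n * 'rV[R]_m).
Variables (muX muY : R).
Local Notation X := (conv_hull A).
Local Notation Y := (conv_hull B).
Hypotheses (Xx : X x) (Yy : Y y).
Hypothesis dL : differentiable (fun p : 'rV[R]_n * 'rV[R]_m => L p.1 p.2) (x, y).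
Hypotheses (aSx : active_set A Sx x) (aSy : active_set B Sy y).
Hypotheses (PFWv : PFW_away Sx Sy L (x, y) v) (FWs : FW_vertex X Y L (x, y) s).
Hypotheses (muX0 : 0 <= muX) (muY0 : 0 <= muY).
Hypothesis scX : strongly_convex_on X (fun x0 => L x0 y) muX.
Hypothesis scY : strongly_convex_on Y (fun y0 => - L x y0) muY.

Let Gx := dotp (v.1 - s.1) (rfield L (x, y)).1.
Let Gy := dotp (v.2 - s.2) (rfield L (x, y)).2.

Let partial_bounds Mr : 0 < Mr -> (Mr%:E <= mu_geom_L A B X Y L)%E ->
  (forall x', X x' -> L x y - L x' y <= Gx ^+ 2 / (2 * Mr)) /\
  (forall y', Y y' -> L x y' - L x y <= Gy ^+ 2 / (2 * Mr)).
Proof.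
move=> Mr0 Mr_le; have [Sv1 [Sv2 _]] := PFWv.
move: (FW_vertex_min FWs) (PFW_away_max PFWv).
rewrite /Gx /Gy rfieldE // => -[s1_min s2_min] [v1_max v2_max].
have dLx := differentiable_slice1 dL.
have dNLy := differentiableN (differentiable_slice2 dL).
split => [x' Xx' | y' Yy'].
  apply: pfw_gap_bound muX0 scX dLx Xx Xx' aSx Sv1 v1_max s1_min (lexx _) Mr0 _.
  exact: le_trans Mr_le (mu_geom_L_le_l Yy).
have -> : L x y' - L x y = - L x y - - L x y' by rewrite opprK addrC.
apply: pfw_gap_bound muY0 scY dNLy Yy Yy' aSy Sv2 v2_max s2_min (lexx _) Mr0 _.
exact: le_trans Mr_le (mu_geom_L_le_r Xx).
Qed.

Lemma hgap_le_gPFW Mr : 0 < Mr -> (Mr%:E <= mu_geom_L A B X Y L)%E ->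
  hgap X Y L (x, y) <= gPFW L (x, y) v s ^+ 2 / (2 * Mr).
Proof.
move=> Mr0 Mr_le; have [bx bY] := partial_bounds Mr0 Mr_le.
apply: le_trans (hgap_le Xx Yy bx bY) _.
have [Sv1 [Sv2 _]] := PFWv; have [s1_min s2_min] := FW_vertex_min FWs.
by apply: add_sqr_div_le => //; [exact: pfw_gap_ge0 aSx Sv1 s1_min
                                 | exact: pfw_gap_ge0 aSy Sv2 s2_min].
Qed.

Lemma saddle_gaps_le_gPFW xs ys : X xs -> Y ys -> (0 < mu_geom_L A B X Y L)%E ->
  wgap L xs ys (x, y) <= hgap X Y L (x, y) /\
  ((hgap X Y L (x, y))%:E <=
     ((gPFW L (x, y) v s) ^+ 2)%:E / (2%:E * mu_geom_L A B X Y L))%E.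
Proof.
move=> Xxs Yys mu_gt0; split; last first.
  by apply: lee_sqr_div_of_fin => // Mr; exact: hgap_le_gPFW.
have [Mr Mr0 Mr_le] := ereal_gt0_fin_lb mu_gt0.
have [bx bY] := partial_bounds Mr0 Mr_le.
exact: (wgap_le_hgap bx bY Xxs Yys).
Qed.

End PairwiseFrankWolfe.

Theorem lemma19 (R : realType) (n m : nat)
  (X : set 'rV[R]_n) (Y : set 'rV[R]_m) (L : 'rV[R]_n -> 'rV[R]_m -> R)
  (xs : 'rV[R]_n) (ys : 'rV[R]_m) :
  X !=set0 -> Y !=set0 -> convex_set X -> convex_set Y ->
  compact X -> compact Y ->
  (forall x y, X x -> Y y ->
     differentiable (fun p : 'rV[R]_n * 'rV[R]_m => L p.1 p.2) (x, y)) ->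
  unif_strongly_convex_concave X Y L ->
  saddle_point X Y L xs ys ->
  forall (x : 'rV[R]_n) (y : 'rV[R]_m), X x -> Y y ->
  (* (I) *)
  (rel_interior (X `*` Y) (xs, ys) -> (0 < mu_int_L X Y L xs ys)%E ->
   forall s : 'rV[R]_n * 'rV[R]_m, FW_vertex X Y L (x, y) s ->
   ((wgap L xs ys (x, y))%:E <=
      ((gFW L (x, y) s) ^+ 2)%:E / (2%:E * mu_int_L X Y L xs ys))%E)
  /\
  (* (P) *)
  (forall (A : {fset 'rV[R]_n}) (B : {fset 'rV[R]_m}),
   X = conv_hull A -> Y = conv_hull B -> (0 < mu_geom_L A B X Y L)%E ->
   forall (Sx : {fset 'rV[R]_n}) (Sy : {fset 'rV[R]_m}),
   active_set A Sx x -> active_set B Sy y ->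
   forall v s : 'rV[R]_n * 'rV[R]_m,
   PFW_away Sx Sy L (x, y) v -> FW_vertex X Y L (x, y) s ->
   wgap L xs ys (x, y) <= hgap X Y L (x, y) /\
   ((hgap X Y L (x, y))%:E <=
      ((gPFW L (x, y) v s) ^+ 2)%:E / (2%:E * mu_geom_L A B X Y L))%E).
Proof.
(* Only the membership of the saddle point is used: it need not be relatively
   interior, since a ray from [x] through any other point of a compact set leaves
   the set at a point of its relative boundary. *)
move=> _ _ _ _ cX cY dL [muX [muY [muX0 [muY0 [scX scY]]]]] [Xxs [Yys _]] x y Xx Yy.
have dLxy := dL x y Xx Yy.
split=> [_ mu_gt0 s FWs | A B XA YB mu_gt0 Sx Sy aSx aSy v s PFWv FWs].
  apply: lee_sqr_div_of_fin => // Mr Mr0 Mr_le.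
  exact: (wgap_le_gFW Xx Yy dLxy cX cY Xxs Yys FWs Mr0 Mr_le).
subst X Y; exact: (saddle_gaps_le_gPFW Xx Yy dLxy aSx aSy PFWv FWs (ltW muX0) (ltW muY0)
  (scX y Yy) (scY x Xx) Xxs Yys mu_gt0).
Qed.
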